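(* Let $0<s\le1$ and let $\beta\in(1,2)$ be such that the $\beta$-expansion of $1$ terminates; fix $m\in\mathbb N$, $\bar p\in[0,1]^{2^m}$ and $\epsilon>0$. Suppose there are a strictly increasing sequence $(M_k)$ of natural numbers and $0\le c<1$ such that $N^s_\infty\big([0,1)\cap G^{\beta,m}_{\bar p}(M_k,\epsilon)\big)<c$ for all $k$. Then for each cylinder $C$ of $f_\beta$ which is a scaling of $[0,1)$ (i.e. if $C$ has generation $n$ then $f_\beta^n$ maps $C$ onto $[0,1)$, so that $C$ is an affine copy of $[0,1)$ of length $\beta^{-n}$), there is $K_C$ such that $N^s_\infty\big(C\cap G^{\beta,m}_{\bar p}(M_k,\epsilon/2)\big)<c|C|^s$ for all $k>K_C$.
   Context: For $\beta\in(1,2)$ let $f_\beta(x)=\beta x \bmod 1$ on $[0,1)$ and $d_n(x,\beta)=\lfloor \beta f_\beta^n(x)\rfloor$, $n\ge0$; $(x_n)_{n\ge0}=(d_n(x,\beta))_{n\ge0}\in\{0,1\}^{\mathbb N}$ is the $\beta$-expansion of $x$. The expansion of $1$ terminates if $d(1,\beta)=j_0\dots j_{k-1}0^\infty$. A cylinder of generation $n$ is a nonempty set $[i_0\cdots i_{n-1}]=\{x\in[0,1): d_k(x,\beta)=i_k,\ 0\le k<n\}$. For a word $w$ of length $m$ and $n>m$, $\tau^\beta_w(x,n)=\#\{i\in\{0,\dots,n-m-1\}: x_i\dots x_{i+m-1}=w\}$; enumerating binary words of length $m$ as $w_1,\dots,w_{2^m}$, $G^{\beta,m}_{\bar p}(n,\epsilon)=\{x\in[0,1):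 p_{w_j}-\epsilon<\tau^\beta_{w_j}(x,n)/(n-m)<p_{w_j}+\epsilon,\ j=1,\dots,2^m\}$. $N^s_\infty(F)=\inf\{\sum_i|C_i|^s: F\subset\bigcup_iC_i\}$, the infimum over countable covers by cylinders of $f_\beta$. *)

From Stdlib Require Import Reals Lra Lia ZArith List Classical ClassicalEpsilon.
Open Scope R_scope.

(* floor: Int_part x satisfies IZR (Int_part x) <= x < IZR (Int_part x) + 1 *)

Definition fbeta (beta x : R) : R := beta * x - IZR (Int_part (beta * x)).

Definition fbeta_iter (beta : R) (n : nat) (x : R) : R := Nat.iter n (fbeta beta) x.

Definition digit (beta : R) (n : nat) (x : R) : Z :=
  Int_part (beta * fbeta_iter beta n x).

Definition expansion_of_one_terminates (beta : R) : Prop :=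
  exists k : nat, forall n : nat, (k <= n)%nat -> digit beta n 1 = 0%Z.

Definition binary_word (w : list Z) : Prop := Forall (fun a => a = 0%Z \/ a = 1%Z) w.

(* [i_0 ... i_{n-1}] as a set (it is a cylinder when nonempty) *)
Definition cyl (beta : R) (w : list Z) (x : R) : Prop :=
  0 <= x < 1 /\ forall k : nat, (k < length w)%nat -> digit beta k x = nth k w 0%Z.

Definition is_cylinder_word (beta : R) (w : list Z) : Prop := exists x, cyl beta w x.

(* supremum / infimum of a set of reals (classical choice; junk if not existing) *)
Definition Rsup (E : R -> Prop) : R :=
  epsilon (inhabits 0) (fun m => is_lub E m).

Definition Rinf (E : R -> Prop) : R :=
  epsilon (inhabits 0)
    (fun m => (forall x, E x -> m <= x) /\ (forall b, (forall x, E x -> b <= x) -> b <= m)).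

Definition diam (S : R -> Prop) : R :=
  Rsup (fun d => exists x y, S x /\ S y /\ d = Rabs (x - y)).

(* A countable cover by cylinders: a sequence of (optional, to allow finite
   covers) cylinder words. *)
Definition cyl_cover (beta : R) (C : nat -> option (list Z)) (F : R -> Prop) : Prop :=
  (forall i w, C i = Some w -> is_cylinder_word beta w) /\
  (forall x, F x -> exists i w, C i = Some w /\ cyl beta w x).

Definition cover_term (beta s : R) (C : nat -> option (list Z)) (i : nat) : R :=
  match C i with
  | None => 0
  | Some w => Rpower (diam (cyl beta w)) s
  end.

(* N^s_infty(F) = inf { sum_i |C_i|^s : F subset U_i C_i, C_i cylinders }
   (covers with divergent sum contribute +infty, hence are irrelevant to the inf) *)
Definition Ns_infty (beta s : R) (F : R -> Prop) : R :=
  Rinf (fun v => exists C : nat -> option (list Z),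
           cyl_cover beta C F /\ infinite_sum (cover_term beta s C) v).

Definition word_at (beta : R) (x : R) (i m : nat) : list Z :=
  map (fun j => digit beta (i + j) x) (seq 0 m).

Definition tau (beta : R) (w : list Z) (x : R) (n : nat) : nat :=
  length (filter (fun i => if list_eq_dec Z.eq_dec (word_at beta x i (length w)) w
                           then true else false)
                 (seq 0 (n - length w))).

(* G^{beta,m}_pbar(n,eps); pbar is given as a function on words (only its values
   on the 2^m binary words of length m matter) *)
Definition G (beta : R) (m : nat) (p : list Z -> R) (n : nat) (eps : R) (x : R) : Prop :=
  0 <= x < 1 /\
  forall w : list Z, binary_word w -> length w = m ->
    p w - eps < INR (tau beta w x n) / INR (n - m) < p w + eps.

(* Let C = [w] be a cylinder of generation n on which f_beta^n is a bijection
   onto [0,1).  Two facts drive the proof.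
   (1) Geometry: on C the map f_beta^n is x |-> beta^n x + const, so C is an
       affine copy of [0,1) of ratio beta^-n <= |C|; prefixing a cylinder word
       u with w gives the cylinder [w u], the preimage of [u] in C, with
       |[w u]| <= beta^-n |[u]|.  Hence a cylinder cover (u_i) of a set F with
       sum v pulls back to the cylinder cover (w u_i) of C /\ f^-n F with sum
       at most beta^(-ns) v, so N^s_infty(C /\ f^-n F) < c beta^(-ns) whenever
       N^s_infty(F) < c <= 1.
   (2) Frequencies: shifting a point by n changes every count tau_w(x, N) by
       at most n, so for N large f^n maps G(N, eps/2) into G(N, eps).
   The theorem follows by monotonicity of N^s_infty:
   N^s_infty(C /\ G(M_k, eps/2)) <= N^s_infty(C /\ f^-n G(M_k, eps))
                                  < c beta^(-ns) <= c |C|^s. *)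

From Stdlib Require Import Reals Lra Lia ZArith List Classical ClassicalEpsilon.
Open Scope R_scope.

(** * The map f_beta and its cylinders *)

Lemma fbeta_range beta r : 0 <= fbeta beta r < 1.
Proof. unfold fbeta. destruct (base_Int_part (beta * r)). lra. Qed.

Lemma fbeta_iter_S beta k x :
  fbeta_iter beta (S k) x = beta * fbeta_iter beta k x - IZR (digit beta k x).
Proof. reflexivity. Qed.

Lemma fbeta_iter_add beta j n x :
  fbeta_iter beta (j + n) x = fbeta_iter beta j (fbeta_iter beta n x).
Proof.
  induction j as [|j IH]; [reflexivity|].
  unfold fbeta_iter in *. simpl. now rewrite IH.
Qed.

Lemma digit_shift beta n j x :
  digit beta (n + j) x = digit beta j (fbeta_iter beta n x).
Proof. unfold digit. rewrite Nat.add_comm, fbeta_iter_add. reflexivity. Qed.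

Lemma fbeta_iter_range beta n x : 0 <= x < 1 -> 0 <= fbeta_iter beta n x < 1.
Proof. destruct n; intros H; [exact H | apply fbeta_range]. Qed.

Lemma fbeta_iter_diff beta n x1 x2 :
  (forall k, (k < n)%nat -> digit beta k x1 = digit beta k x2) ->
  fbeta_iter beta n x1 - fbeta_iter beta n x2 = beta ^ n * (x1 - x2).
Proof.
  induction n as [|n IH]; intros Hd.
  - unfold fbeta_iter. simpl. ring.
  - rewrite !fbeta_iter_S, (Hd n) by lia. rewrite <- tech_pow_Rmult.
    replace (beta * fbeta_iter beta n x1 - IZR (digit beta n x2) -
      (beta * fbeta_iter beta n x2 - IZR (digit beta n x2))) with
      (beta * (fbeta_iter beta n x1 - fbeta_iter beta n x2)) by ring.
    rewrite IH by (intros; apply Hd; lia). ring.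
Qed.

Lemma cyl_app beta w u x :
  cyl beta (w ++ u) x <-> cyl beta w x /\ cyl beta u (fbeta_iter beta (length w) x).
Proof.
  split.
  - intros [Hx Hd]. split; split; auto.
    + intros k Hk. rewrite Hd by (rewrite length_app; lia). apply app_nth1; lia.
    + apply fbeta_iter_range; auto.
    + intros k Hk. rewrite <- digit_shift, Hd by (rewrite length_app; lia).
      rewrite app_nth2 by lia. f_equal. lia.
  - intros [[Hx Hd1] [_ Hd2]]. split; auto. intros k Hk. rewrite length_app in Hk.
    destruct (Nat.lt_ge_cases k (length w)).
    + rewrite app_nth1 by lia. auto.
    + rewrite app_nth2 by lia.
      replace k with (length w + (k - length w))%nat at 1 by lia.
      rewrite digit_shift. apply Hd2. lia.
Qed.

Lemma sum_nonneg f n : (forall i, 0 <= f i) -> 0 <= sum_f_R0 f n.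
Proof. intros H. induction n; simpl; [apply H|]. specialize (H (S n)). lra. Qed.

Lemma term_le_sum f v i : (forall i, 0 <= f i) -> infinite_sum f v -> f i <= v.
Proof.
  intros H Hv. apply Rle_trans with (sum_f_R0 f i); [|apply sum_incr; auto].
  destruct i; simpl; [lra|]. pose proof (sum_nonneg f i H). lra.
Qed.

Lemma series_bounded_cv f b :
  (forall i, 0 <= f i) -> (forall N, sum_f_R0 f N <= b) ->
  exists u, infinite_sum f u /\ u <= b.
Proof.
  intros Hpos Hb.
  destruct (growing_cv (sum_f_R0 f)) as [u Hu].
  - intros N. simpl. pose proof (Hpos (S N)). lra.
  - exists b. intros x [N ->]. apply Hb.
  - exists u. split; [exact Hu|].
    apply (Rle_cv_lim (Vn := fun _ => b) Hb Hu).
    intros e He. exists 0%nat. intros. unfold Rdist. rewrite Rminus_diag, Rabs_R0. lra.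
Qed.

Lemma Rinf_spec (E : R -> Prop) : (exists v, E v) -> (forall v, E v -> 0 <= v) ->
  (forall x, E x -> Rinf E <= x) /\ (forall b, (forall x, E x -> b <= x) -> b <= Rinf E).
Proof.
  intros [v0 Hv0] Hpos. unfold Rinf. apply epsilon_spec.
  destruct (completeness (fun y => E (- y))) as [l [Hl1 Hl2]].
  - exists 0. intros y Hy. apply Hpos in Hy. lra.
  - exists (- v0). rewrite Ropp_involutive. exact Hv0.
  - exists (- l). split.
    + intros x Hx. assert (- x <= l) by (apply Hl1; rewrite Ropp_involutive; exact Hx). lra.
    + intros b Hb. assert (l <= - b) by (apply Hl2; intros y Hy; apply Hb in Hy; lra). lra.
Qed.

(** * Diameters of subsets of [0,1) *)

Section Diameter.

Variable S : R -> Prop.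
Hypothesis S_unit : forall x, S x -> 0 <= x < 1.

Lemma diam_lub : (exists x, S x) ->
  is_lub (fun d => exists x y, S x /\ S y /\ d = Rabs (x - y)) (diam S).
Proof.
  intros [x0 Hx0]. unfold diam, Rsup. apply epsilon_spec.
  destruct (completeness (fun d => exists x y, S x /\ S y /\ d = Rabs (x - y))) as [l Hl].
  - exists 1. intros d (x & y & Hx & Hy & ->). apply S_unit in Hx. apply S_unit in Hy.
    unfold Rabs; destruct Rcase_abs; lra.
  - exists 0, x0, x0. rewrite Rminus_diag, Rabs_R0. auto.
  - exists l. exact Hl.
Qed.

Lemma diam_ge x y : S x -> S y -> Rabs (x - y) <= diam S.
Proof. intros Hx Hy. apply (diam_lub (ex_intro _ x Hx)). exists x, y. auto. Qed.

Lemma diam_nonneg x : S x -> 0 <= diam S.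
Proof. intros Hx. pose proof (diam_ge x x Hx Hx). rewrite Rminus_diag, Rabs_R0 in H. exact H. Qed.

Lemma diam_le b : (exists x, S x) ->
  (forall x y, S x -> S y -> Rabs (x - y) <= b) -> diam S <= b.
Proof. intros Hne Hb. apply (diam_lub Hne). intros d (x & y & Hx & Hy & ->). auto. Qed.

Lemma diam_pos_witness : (exists x, S x) -> 0 < diam S ->
  exists x y, S x /\ S y /\ 0 < Rabs (x - y).
Proof.
  intros Hne Hpos. apply NNPP. intros Hno.
  assert (diam S <= 0).
  { apply diam_le; auto. intros x y Hx Hy. apply Rnot_lt_le. intros Hlt. apply Hno. eauto. }
  lra.
Qed.

End Diameter.

(** * The cylinder content N^s_infty *)

Definition cover_values (beta s : R) (F : R -> Prop) (v : R) : Prop :=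
  exists C, cyl_cover beta C F /\ infinite_sum (cover_term beta s C) v.

Lemma cover_term_nonneg beta s C i : 0 <= cover_term beta s C i.
Proof. unfold cover_term. destruct (C i); [left; apply exp_pos | lra]. Qed.

Lemma cover_values_nonneg beta s F v : cover_values beta s F v -> 0 <= v.
Proof.
  intros [C [_ HC]]. apply Rle_trans with (cover_term beta s C 0);
    [apply cover_term_nonneg | apply term_le_sum; auto using cover_term_nonneg].
Qed.

(* A subset of [0,1) is covered by the single cylinder of the empty word. *)
Lemma cover_values_inhabited beta s (F : R -> Prop) :
  (forall x, F x -> 0 <= x < 1) -> exists v, cover_values beta s F v.
Proof.
  intros HF. set (C0 := fun i : nat => match i with O => Some (@nil Z) | _ => None end).
  assert (Hnil : forall x, 0 <= x < 1 -> cyl beta nil x) by (split; simpl; auto; lia).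
  exists (cover_term beta s C0 0), C0. split; [split|].
  - intros [|i] w Hi; inversion Hi; subst. exists 0. apply Hnil. lra.
  - intros x Hx. exists 0%nat, nil. auto.
  - assert (Hs : forall N, sum_f_R0 (cover_term beta s C0) N = cover_term beta s C0 0).
    { induction N as [|N IH]; simpl; [reflexivity|]. rewrite IH.
      unfold cover_term at 2. simpl. ring. }
    intros e He. exists 0%nat. intros N _. rewrite Hs. unfold Rdist.
    rewrite Rminus_diag, Rabs_R0. lra.
Qed.

Lemma Ns_infty_le_cover beta s F v : cover_values beta s F v -> Ns_infty beta s F <= v.
Proof.
  intros Hv. apply (Rinf_spec (cover_values beta s F)); eauto using cover_values_nonneg.
Qed.

Lemma Ns_infty_lt_cover beta s F c : (forall x, F x -> 0 <= x < 1) ->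
  Ns_infty beta s F < c -> exists v, cover_values beta s F v /\ v < c.
Proof.
  intros HF HN. apply NNPP. intros Hno.
  destruct (Rinf_spec (cover_values beta s F)) as [_ Hglb];
    eauto using cover_values_inhabited, cover_values_nonneg.
  assert (c <= Ns_infty beta s F).
  { apply Hglb. intros v Hv. apply Rnot_lt_le. intros Hlt. apply Hno. eauto. }
  lra.
Qed.

Lemma Ns_infty_mono beta s (E F : R -> Prop) : (forall x, F x -> 0 <= x < 1) ->
  (forall x, E x -> F x) -> Ns_infty beta s E <= Ns_infty beta s F.
Proof.
  intros HF HEF.
  assert (Hsub : forall v, cover_values beta s F v -> cover_values beta s E v).
  { intros v [C [[Hw Hcov] Hsum]]. exists C. split; [split|]; auto. }
  destruct (cover_values_inhabited beta s F HF) as [v0 Hv0].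
  apply (Rinf_spec (cover_values beta s F)); eauto using cover_values_nonneg.
  intros v Hv. apply Ns_infty_le_cover. auto.
Qed.

(* With the convention ln 0 = 0, the term of a cylinder of diameter 0 is 1. *)
Lemma Rpower_0_base s : Rpower 0 s = 1.
Proof.
  unfold Rpower. replace (ln 0) with 0; [rewrite Rmult_0_r; apply exp_0|].
  unfold ln. destruct (Rlt_dec 0 0) as [r|r]; [exfalso; lra | reflexivity].
Qed.

(** * Full cylinders *)

(* The ratio beta^-n by which a full cylinder of generation n copies [0,1). *)
Definition cyl_ratio (beta : R) (w : list Z) : R := / beta ^ length w.

Definition prefix_cover (w : list Z) (D : nat -> option (list Z)) : nat -> option (list Z) :=
  fun i => option_map (app w) (D i).

Section FullCylinder.

Variables (beta : R) (w : list Z).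
Hypothesis beta_pos : 0 < beta.
Hypothesis w_full : forall y, 0 <= y < 1 ->
  exists x, cyl beta w x /\ fbeta_iter beta (length w) x = y.

Lemma cyl_ratio_pos : 0 < cyl_ratio beta w.
Proof. apply Rinv_0_lt_compat, pow_lt, beta_pos. Qed.

Lemma full_cyl_affine x1 x2 : cyl beta w x1 -> cyl beta w x2 ->
  x1 - x2 = cyl_ratio beta w *
            (fbeta_iter beta (length w) x1 - fbeta_iter beta (length w) x2).
Proof.
  intros [_ H1] [_ H2]. rewrite fbeta_iter_diff.
  - unfold cyl_ratio. field. apply pow_nonzero. lra.
  - intros k Hk. rewrite H1, H2 by auto. reflexivity.
Qed.

Lemma full_cyl_lift u y : cyl beta u y ->
  exists x, cyl beta (w ++ u) x /\ fbeta_iter beta (length w) x = y.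
Proof.
  intros Hy. destruct (w_full y (proj1 Hy)) as [x [Hx Ex]].
  exists x. split; auto. apply cyl_app. rewrite Ex. auto.
Qed.

Lemma full_cyl_app_nonempty u : is_cylinder_word beta u -> is_cylinder_word beta (w ++ u).
Proof. intros [y Hy]. destruct (full_cyl_lift u y Hy) as [x [Hx _]]. exists x. exact Hx. Qed.

(* [w] contains the preimages under f^n of 0 and of 1 - eta for every eta > 0,
   so its diameter is at least beta^-n. *)
Lemma full_cyl_diam_ge : cyl_ratio beta w <= diam (cyl beta w).
Proof.
  pose proof cyl_ratio_pos as Ha.
  apply Rnot_lt_le. intros Hlt. set (d := diam (cyl beta w)) in *.
  set (eta := (cyl_ratio beta w - d) / (2 * cyl_ratio beta w)).
  assert (Heta : eta * (2 * cyl_ratio beta w) = cyl_ratio beta w - d)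
    by (unfold eta; field; lra).
  destruct (w_full 0) as [x1 [Hx1 E1]]; [lra|].
  assert (Hd : 0 <= d) by (apply (diam_nonneg _ (fun x H => proj1 H) x1 Hx1)).
  destruct (w_full (1 - eta)) as [x2 [Hx2 E2]]; [nra|].
  assert (Hle : Rabs (x2 - x1) <= d) by (apply (diam_ge _ (fun x H => proj1 H)); auto).
  rewrite (full_cyl_affine x2 x1 Hx2 Hx1), E1, E2, Rabs_mult,
    (Rabs_pos_eq (cyl_ratio beta w)), Rabs_pos_eq in Hle by nra.
  nra.
Qed.

Lemma diam_cyl_app_le u : is_cylinder_word beta u ->
  diam (cyl beta (w ++ u)) <= cyl_ratio beta w * diam (cyl beta u).
Proof.
  intros Hu. apply (diam_le _ (fun x H => proj1 H)); [apply full_cyl_app_nonempty; auto|].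
  intros z1 z2 Hz1 Hz2.
  apply cyl_app in Hz1 as [Hz1 Hz1']. apply cyl_app in Hz2 as [Hz2 Hz2'].
  rewrite (full_cyl_affine z1 z2 Hz1 Hz2), Rabs_mult, (Rabs_pos_eq (cyl_ratio beta w))
    by (pose proof cyl_ratio_pos; lra).
  apply Rmult_le_compat_l; [pose proof cyl_ratio_pos; lra|].
  apply (diam_ge _ (fun x H => proj1 H)); auto.
Qed.

Lemma diam_cyl_app_pos u : is_cylinder_word beta u -> 0 < diam (cyl beta u) ->
  0 < diam (cyl beta (w ++ u)).
Proof.
  intros Hu Hpos.
  destruct (diam_pos_witness _ (fun x H => proj1 H) Hu Hpos) as (y1 & y2 & Hy1 & Hy2 & Hy12).
  destruct (full_cyl_lift u y1 Hy1) as [x1 [Hx1 E1]].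
  destruct (full_cyl_lift u y2 Hy2) as [x2 [Hx2 E2]].
  apply Rlt_le_trans with (Rabs (x1 - x2)); [|apply (diam_ge _ (fun x H => proj1 H)); auto].
  apply cyl_app in Hx1 as [Hx1 _]. apply cyl_app in Hx2 as [Hx2 _].
  rewrite (full_cyl_affine x1 x2 Hx1 Hx2), E1, E2, Rabs_mult, (Rabs_pos_eq (cyl_ratio beta w))
    by (pose proof cyl_ratio_pos; lra).
  apply Rmult_lt_0_compat; [apply cyl_ratio_pos | exact Hy12].
Qed.

Lemma prefix_cover_covers D (F : R -> Prop) : cyl_cover beta D F ->
  cyl_cover beta (prefix_cover w D)
            (fun x => cyl beta w x /\ F (fbeta_iter beta (length w) x)).
Proof.
  intros [HDcyl HDcov]. split.
  - intros i u Hi. unfold prefix_cover in Hi. destruct (D i) as [u0|] eqn:E; inversion Hi.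
    apply full_cyl_app_nonempty. exact (HDcyl i u0 E).
  - intros x [Hx HFx]. destruct (HDcov _ HFx) as [i [u [Hi Hu]]].
    exists i, (w ++ u). split; [unfold prefix_cover; rewrite Hi; reflexivity|].
    apply cyl_app. auto.
Qed.

(* Each pulled-back term is at most beta^(-ns) times the original one, provided
   the original term is below 1 (which rules out cylinders of diameter 0). *)
Lemma prefix_cover_term s D i : 0 <= s ->
  (forall i u, D i = Some u -> is_cylinder_word beta u) ->
  cover_term beta s D i < 1 ->
  cover_term beta s (prefix_cover w D) i <= Rpower (cyl_ratio beta w) s * cover_term beta s D i.
Proof.
  intros Hs HDcyl Hlt1. unfold cover_term, prefix_cover in *.
  destruct (D i) as [u|] eqn:Hi; simpl; [|lra].
  pose proof (HDcyl i u Hi) as Hu. destruct (HDcyl i u Hi) as [y0 Hy0].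
  assert (Hdpos : 0 < diam (cyl beta u)).
  { destruct (diam_nonneg (cyl beta u) (fun x H => proj1 H) y0 Hy0) as [|Hd0]; auto.
    rewrite <- Hd0, Rpower_0_base in Hlt1. lra. }
  rewrite Rpower_mult_distr by (auto using cyl_ratio_pos).
  apply Rle_Rpower_l; [exact Hs | split; [apply diam_cyl_app_pos; auto |]].
  apply diam_cyl_app_le. exact Hu.
Qed.

Lemma Ns_infty_pullback s (F : R -> Prop) c : 0 <= s ->
  (forall x, F x -> 0 <= x < 1) -> Ns_infty beta s F < c -> c <= 1 ->
  Ns_infty beta s (fun x => cyl beta w x /\ F (fbeta_iter beta (length w) x))
    < c * Rpower (cyl_ratio beta w) s.
Proof.
  intros Hs HF HN Hc1.
  destruct (Ns_infty_lt_cover beta s F c HF HN) as [v [[D [HDcover HDsum]] Hvc]].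
  set (ap := Rpower (cyl_ratio beta w) s).
  assert (Hap : 0 < ap) by apply exp_pos.
  assert (Hterm : forall i, cover_term beta s (prefix_cover w D) i
                            <= ap * cover_term beta s D i).
  { intros i. apply prefix_cover_term; [exact Hs | apply HDcover |].
    pose proof (term_le_sum _ v i (cover_term_nonneg beta s D) HDsum). lra. }
  destruct (series_bounded_cv (cover_term beta s (prefix_cover w D)) (ap * v))
    as [u [Hu Huv]].
  - apply cover_term_nonneg.
  - intros N. apply Rle_trans with (sum_f_R0 (fun i => cover_term beta s D i * ap) N).
    + apply sum_Rle. intros i _. rewrite Rmult_comm. apply Hterm.
    + rewrite <- scal_sum. apply Rmult_le_compat_l; [lra|].
      apply sum_incr; [exact HDsum | apply cover_term_nonneg].
  - apply Rle_lt_trans with u.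
    + apply Ns_infty_le_cover. exists (prefix_cover w D).
      split; [apply prefix_cover_covers|]; auto.
    + assert (ap * v < ap * c) by (apply Rmult_lt_compat_l; auto). lra.
Qed.

End FullCylinder.

(** * Word frequencies along a shifted orbit *)

Lemma count_shift (f : nat -> bool) n a L :
  length (filter (fun i => f (n + i)%nat) (seq a L)) = length (filter f (seq (n + a) L)).
Proof.
  revert a. induction L as [|L IH]; intros a; simpl; [reflexivity|].
  destruct (f (n + a)%nat); simpl; rewrite IH;
    replace (n + S a)%nat with (S (n + a)) by lia; reflexivity.
Qed.

Lemma count_window_shift (f : nat -> bool) n L :
  (length (filter f (seq n L)) <= length (filter f (seq 0 L)) + n /\
   length (filter f (seq 0 L)) <= length (filter f (seq n L)) + n)%nat.
Proof.
  assert (E : seq 0 n ++ seq n L = seq 0 L ++ seq L n).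
  { pose proof (seq_app n L 0) as E1. pose proof (seq_app L n 0) as E2.
    rewrite Nat.add_comm in E2. simpl in E1, E2. rewrite <- E1, E2. reflexivity. }
  assert (Hc := f_equal (fun l => length (filter f l)) E). simpl in Hc.
  rewrite !filter_app, !length_app in Hc.
  pose proof (filter_length_le f (seq 0 n)). pose proof (filter_length_le f (seq L n)).
  rewrite length_seq in *. lia.
Qed.

Lemma word_at_shift beta n x i len :
  word_at beta (fbeta_iter beta n x) i len = word_at beta x (n + i) len.
Proof. unfold word_at. apply map_ext. intros j. rewrite <- digit_shift. f_equal. lia. Qed.

Lemma tau_shift beta n x w N :
  (tau beta w (fbeta_iter beta n x) N <= tau beta w x N + n /\
   tau beta w x N <= tau beta w (fbeta_iter beta n x) N + n)%nat.
Proof.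
  unfold tau.
  set (f := fun i => if list_eq_dec Z.eq_dec (word_at beta x i (length w)) w then true else false).
  rewrite (filter_ext _ (fun i => f (n + i)%nat))
    by (intros i; unfold f; rewrite word_at_shift; reflexivity).
  rewrite count_shift, Nat.add_0_r. apply count_window_shift.
Qed.

Lemma freq_close (p e tx ty L d : R) :
  0 < L -> d < e / 2 * L -> ty - tx <= d -> tx - ty <= d ->
  p - e / 2 < tx / L < p + e / 2 -> p - e < ty / L < p + e.
Proof.
  intros HL Hd H1 H2 [H3 H4].
  assert (HdL : d / L < e / 2).
  { apply (Rmult_lt_reg_r L); auto. unfold Rdiv at 1. rewrite Rmult_assoc, Rinv_l by lra. lra. }
  assert (HiL : 0 <= / L) by (left; apply Rinv_0_lt_compat; auto).
  assert (ty / L - tx / L <= d / L).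
  { unfold Rdiv. rewrite <- Rmult_minus_distr_r. apply Rmult_le_compat_r; lra. }
  assert (tx / L - ty / L <= d / L).
  { unfold Rdiv. rewrite <- Rmult_minus_distr_r. apply Rmult_le_compat_r; lra. }
  lra.
Qed.

Lemma G_shift beta m p N eps n x : (m < N)%nat ->
  INR n < eps / 2 * INR (N - m) ->
  G beta m p N (eps / 2) x -> G beta m p N eps (fbeta_iter beta n x).
Proof.
  intros HmN Hn [Hx HGx]. split; [apply fbeta_iter_range; auto|].
  intros w' Hw' Hlen.
  destruct (tau_shift beta n x w' N) as [T1 T2].
  apply le_INR in T1; apply le_INR in T2; rewrite plus_INR in T1, T2.
  apply (freq_close (p w') eps (INR (tau beta w' x N)) _ (INR (N - m)) (INR n)); auto;
    [apply lt_0_INR; lia | lra | lra].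
Qed.

Lemma eventually_long (M : nat -> nat) n m eps :
  (forall k, (M k < M (S k))%nat) -> 0 < eps ->
  exists K, forall k, (K < k)%nat -> INR n < eps / 2 * INR (M k - m).
Proof.
  intros HMinc Heps.
  assert (HMk : forall k, (k <= M k)%nat) by (induction k; [lia | specialize (HMinc k); lia]).
  destruct (INR_unbounded (INR m + 2 * INR n / eps)) as [K HK].
  exists K. intros k Hk.
  assert (HKM : (K < M k)%nat) by (specialize (HMk k); lia).
  apply lt_INR in HKM.
  assert (Hm : (m <= M k)%nat).
  { apply INR_le. pose proof (pos_INR n). assert (0 <= 2 * INR n / eps).
    { unfold Rdiv. apply Rmult_le_pos; [lra | left; apply Rinv_0_lt_compat; lra]. } lra. }
  rewrite minus_INR by exact Hm.
  assert (H : 2 * INR n / eps < INR (M k) - INR m) by lra.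
  apply (Rmult_lt_compat_l (eps / 2)) in H; [|lra].
  replace (eps / 2 * (2 * INR n / eps)) with (INR n) in H by (field; lra). exact H.
Qed.

Theorem mainTheorem14
  (s beta : R) (m : nat) (p : list Z -> R) (eps : R) (M : nat -> nat) (c : R)
  (Hs : 0 < s <= 1)
  (Hbeta : 1 < beta < 2)
  (Hterm : expansion_of_one_terminates beta)
  (Hp : forall w : list Z, binary_word w -> length w = m -> 0 <= p w <= 1)
  (Heps : 0 < eps)
  (HMinc : forall k : nat, (M k < M (S k))%nat)
  (HMm : forall k : nat, (m < M k)%nat)
  (Hc : 0 <= c < 1)
  (HN : forall k : nat, Ns_infty beta s (G beta m p (M k) eps) < c) :
  forall w : list Z,
    is_cylinder_word beta w ->
    (forall y, 0 <= y < 1 -> exists x, cyl beta w x /\ fbeta_iter beta (length w) x = y) ->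
    exists K : nat, forall k : nat, (K < k)%nat ->
      Ns_infty beta s (fun x => cyl beta w x /\ G beta m p (M k) (eps / 2) x)
        < c * Rpower (diam (cyl beta w)) s.
Proof.
  intros w _ Hfull.
  destruct (eventually_long M (length w) m eps HMinc Heps) as [K HK].
  exists K. intros k Hk.
  set (Gk := G beta m p (M k) eps).
  assert (HGk : forall x, Gk x -> 0 <= x < 1) by (intros x [H _]; exact H).
  (* f^n maps [w] /\ G(M_k, eps/2) into G(M_k, eps) *)
  apply Rle_lt_trans with
    (Ns_infty beta s (fun x => cyl beta w x /\ Gk (fbeta_iter beta (length w) x))).
  - apply Ns_infty_mono; [intros x [Hx _]; exact (proj1 Hx)|].
    intros x [Hx HGx]. split; [exact Hx|]. apply G_shift; auto.
  - apply Rlt_le_trans with (c * Rpower (cyl_ratio beta w) s).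
    + apply Ns_infty_pullback; [lra | exact Hfull | lra | exact HGk | apply HN | lra].
    + apply Rmult_le_compat_l; [lra|].
      apply Rle_Rpower_l; [lra|]. split; [apply cyl_ratio_pos; lra|].
      apply full_cyl_diam_ge; auto. lra.
Qed.
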